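(* Let $n\ge4$, $x_1,\dots,x_{n-1}>0$, $\gamma,\delta>0$ with $\gamma\ne1\ne\delta$, $x_0=1$, and let $\mathbf{P}$ be the $n\times n$ matrix with entries $p_{ij}=x_{j-1}/x_{i-1}$ except $p_{12}=\delta x_1$, $p_{21}=1/(\delta x_1)$, $p_{13}=\gamma x_2$, $p_{31}=1/(\gamma x_2)$. Let $\mathbf{w}^{EM}$ be the principal right eigenvector of $\mathbf{P}$. If $\gamma,\delta<1$, then $w_1^{EM}/w_i^{EM}<x_{i-1}$ for $i=4,\dots,n$.
   Context: The principal right eigenvector is the positive (Perron) eigenvector belonging to the largest eigenvalue. *)

From mathcomp Require Import all_boot all_order all_algebra.
Set Implicit Arguments. Unset Strict Implicit. Unset Printing Implicit Defensive.
Import Order.TTheory GRing.Theory Num.Theory.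
Local Open Scope ring_scope.

(* Indices are 0-based: row/column i : 'I_n corresponds to the paper's i+1.
   x : nat -> R, with x 0 = 1 imposed as a hypothesis; the paper's
   p_{ij} = x_{j-1}/x_{i-1} becomes entry (i,j) = x j / x i. *)
Definition Pmat (R : realFieldType) (n : nat) (x : nat -> R) (gamma delta : R)
  : 'M[R]_n :=
  \matrix_(i < n, j < n)
    if (i == 0%N :> nat) && (j == 1%N :> nat) then delta * x 1%N
    else if (i == 1%N :> nat) && (j == 0%N :> nat) then (delta * x 1%N)^-1
    else if (i == 0%N :> nat) && (j == 2%N :> nat) then gamma * x 2%N
    else if (i == 2%N :> nat) && (j == 0%N :> nat) then (gamma * x 2%N)^-1
    else x j / x i.

Definition principal_right_eigenvector (R : realFieldType) (n : nat)
  (P : 'M[R]_n) (w : 'cV[R]_n) : Prop :=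
  (forall i, 0 < w i 0) /\
  exists lambda : R, P *m w = lambda *: w /\
    (forall mu : R, eigenvalue P mu -> mu <= lambda).

(** Row [i >= 4] of [P] is [(x_{k-1} / x_{i-1})_k], so the eigen-equation gives
    [lambda w_i x_{i-1} = S] with [S = sum_k x_{k-1} w_k > 0]; in particular
    [lambda > 0].  Row 1 of [P] is [(x_{k-1})_k] except that the entries at
    columns 2 and 3 are multiplied by [delta < 1] and [gamma <= 1], so
    [lambda w_1 < S = lambda w_i x_{i-1}]. *)
From mathcomp Require Import all_boot all_order all_algebra.
Set Implicit Arguments. Unset Strict Implicit. Unset Printing Implicit Defensive.
Import Order.TTheory GRing.Theory Num.Theory.
Local Open Scope ring_scope.

Lemma ltr_sum_le_lt (R : numDomainType) (I : finType) (F G : I -> R) (i0 : I) :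
  (forall i, F i <= G i) -> F i0 < G i0 -> \sum_i F i < \sum_i G i.
Proof.
move=> leFG ltFG0; rewrite (bigD1 i0) //= [ltRHS](bigD1 i0) //=.
by rewrite ltr_leD // ler_sum.
Qed.

Section EigenRowComparison.

Variables (R : realFieldType) (n : nat) (P : 'M[R]_n) (w : 'cV[R]_n) (l : R).
Variable x : nat -> R.
Hypothesis w_gt0 : forall k, 0 < w k 0.
Hypothesis x_gt0 : forall k : 'I_n, 0 < x k.
Hypothesis Pw_eq : P *m w = l *: w.

Let S := \sum_(k < n) x k * w k 0.

Lemma eigen_row_sum i : \sum_k P i k * w k 0 = l * w i 0.
Proof. by have := congr1 (fun M : 'cV[R]_n => M i 0) Pw_eq; rewrite !mxE. Qed.

Lemma eigen_scaled_row i :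
  (forall k, P i k = x k / x i) -> l * w i 0 * x i = S.
Proof.
move=> Pi; rewrite -eigen_row_sum mulr_suml; apply: eq_bigr => k _.
by rewrite Pi mulrAC divfK // gt_eqF // x_gt0.
Qed.

Lemma eigen_dominated_row j k0 :
  (forall k, P j k <= x k) -> P j k0 < x k0 -> l * w j 0 < S.
Proof.
move=> leP ltP0; rewrite -eigen_row_sum.
by apply: (ltr_sum_le_lt (i0 := k0)) => [k|]; rewrite ?ltr_pM2r ?ler_pM2r.
Qed.

Lemma eigen_ratio_lt i j k0 :
  (forall k, P i k = x k / x i) ->
  (forall k, P j k <= x k) -> P j k0 < x k0 ->
  w j 0 / w i 0 < x i.
Proof.
move=> Pi leP ltP0; have Ei := eigen_scaled_row Pi.
have S_gt0 : 0 < S.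
  rewrite /S (bigD1 i) //= ltr_wpDr ?mulr_gt0 //.
  by apply: sumr_ge0 => k _; rewrite mulr_ge0 ?ltW.
have l_gt0 : 0 < l by move: S_gt0; rewrite -Ei -mulrA pmulr_lgt0 ?mulr_gt0.
rewrite ltr_pdivrMr // -(ltr_pM2l l_gt0) mulrA mulrAC Ei.
exact: eigen_dominated_row ltP0.
Qed.

End EigenRowComparison.

Section PmatRows.

Variables (R : realFieldType) (n : nat) (x : nat -> R) (gamma delta : R).

Lemma Pmat_generic_row (i k : 'I_n) : (3 <= i)%N ->
  Pmat n x gamma delta i k = x k / x i.
Proof. by case: i => -[|[|[|i]]] //= ? _; rewrite mxE. Qed.

Hypotheses (x0 : x 0%N = 1) (x1_gt0 : 0 < x 1%N) (x2_gt0 : 0 < x 2%N).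
Hypotheses (gamma_le1 : gamma <= 1) (delta_lt1 : delta < 1).

Lemma Pmat_first_row (j k : 'I_n) : j = 0%N :> nat ->
  Pmat n x gamma delta j k =
  if k == 1%N :> nat then delta * x 1%N
  else if k == 2%N :> nat then gamma * x 2%N else x k.
Proof. by move=> j0; rewrite mxE j0 /= x0 divr1. Qed.

Lemma Pmat_first_row_le (j k : 'I_n) : j = 0%N :> nat ->
  Pmat n x gamma delta j k <= x k.
Proof.
move=> j0; rewrite Pmat_first_row //.
case: eqP => [->|_]; first by rewrite ler_piMl // ltW.
by case: eqP => [->|_] //; rewrite ler_piMl // ltW.
Qed.

Lemma Pmat_first_row_lt (j k : 'I_n) : j = 0%N :> nat -> k = 1%N :> nat ->
  Pmat n x gamma delta j k < x k.
Proof. by move=> j0 k1; rewrite Pmat_first_row // k1 /= gtr_pMl. Qed.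

End PmatRows.

Theorem mainTheorem8 (R : realFieldType) (n : nat) (x : nat -> R)
  (gamma delta : R) (w : 'cV[R]_n) :
  (4 <= n)%N ->
  x 0%N = 1 ->
  (forall k : nat, (1 <= k < n)%N -> 0 < x k) ->
  0 < gamma -> 0 < delta -> gamma != 1 -> delta != 1 ->
  principal_right_eigenvector (Pmat n x gamma delta) w ->
  gamma < 1 -> delta < 1 ->
  forall i j : 'I_n, (j == 0%N :> nat) -> (3 <= i)%N ->
    w j 0 / w i 0 < x i.
Proof.
move=> n4 x0 xpos _ _ _ _ [w_gt0 [l [Pw _]]] gamma_lt1 delta_lt1 i j /eqP j0 i3.
have x_gt0 (k : 'I_n) : 0 < x k.
  case: (posnP k) => [->|k_gt0]; first by rewrite x0 ltr01.
  by apply: xpos; rewrite k_gt0 ltn_ord.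
have lt1n : (1 < n)%N by apply: leq_trans n4.
have lt2n : (2 < n)%N by apply: leq_trans n4.
have x1_gt0 : 0 < x 1%N := x_gt0 (Ordinal lt1n).
have x2_gt0 : 0 < x 2%N := x_gt0 (Ordinal lt2n).
have gamma_le1 : gamma <= 1 := ltW gamma_lt1.
apply: (eigen_ratio_lt w_gt0 x_gt0 Pw (k0 := Ordinal lt1n)).
- by move=> k; apply: Pmat_generic_row.
- by move=> k; apply: Pmat_first_row_le.
- exact: Pmat_first_row_lt.
Qed.
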